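(* In the session calculus, strong fairness of groups of components (SG) coincides with strong fairness of components (SC), i.e. a path is SG-fair iff it is SC-fair. Moreover, weak fairness of groups of components (WG) is weaker than weak fairness of components (WC): every WC-fair path is WG-fair.
   Context: Session calculus: threads $P ::= \mathbf{end} \mid \bigoplus_{i\in I} p_i!\lambda_i;P_i \mid \sum_{i\in I} p_i?\lambda_i;P_i \mid X \mid \mu X.P$ (guarded recursion), thread states additionally $\langle q!\lambda\rangle;P$; networks $p[\![P]\!]\mid 0\mid N\parallel N$ with distinct locations and closed threads, modulo associativity/commutativity/unit. Transitions: (choice) $p[\![\bigoplus_{i\in I}p_i!\lambda_i;P_i]\!]\parallel N \xrightarrow{\tau} p[\![\langle p_k!\lambda_k\rangle;P_k]\!]\parallel N$; (unfold) $p[\![\mu X.P]\!]\parallel N\xrightarrow{\tau} p[\![P\{\mu X.P/X\}]\!]\parallel N$; (comm) $p_k[\![\langle q!\lambda_k\rangle;Q]\!]\parallel q[\![\sum_{i\in I}p_i?\lambda_i;P_i]\!]\parallel N \xrightarrow{(p_k,\lambda_k,q)} p_k[\![Q]\!]\parallel q[\![P_k]\!]\parallel N$. $\mathrm{comp}(t)$ is the moving location for a $\tau$-transition and $\{p,q\}$ for label $(p,\lambda,q)$. A path is a network state with a maximal sequence of transitions. For a notion of task (with ''enabled in a state'' and ''engaged in by a path''): a task is relentlessly enabled on a path if every suffix contains a state where it is enabled, perpetually enabled if enabled in every state; a path $\pi$ is strongly fair if for every suffix $\pi'$ each task relentlessly enabled on $\pi'$ is engaged in by $\pi'$, and weakly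 fair if for every suffix $\pi'$ each task perpetually enabled on $\pi'$ is engaged in by $\pi'$. Components (SC/WC): tasks are locations $p$; enabled in $N$ if some transition $t$ from $N$ has $p\in\mathrm{comp}(t)$; engaged in if the path contains $t$ with $p\in\mathrm{comp}(t)$. Groups of components (SG/WG): tasks are sets $G$ of locations; enabled in $N$ if some transition $t$ from $N$ has $\mathrm{comp}(t)=G$; engaged in if the path contains $t$ with $\mathrm{comp}(t)=G$. *)

From Stdlib Require Import List Arith.
Import ListNotations.

Definition loc := nat.
Definition label := nat.
Definition rvar := nat.

(* Threads:  end | (+)_i p_i!l_i;P_i | Sum_i p_i?l_i;P_i | X | mu X.P
   Branches over a finite index set I are given as lists. *)
Inductive thread : Type :=
| TEnd
| TSend (br : list (loc * label * thread))
| TRecv (br : list (loc * label * thread))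
| TVar (X : rvar)
| TMu (X : rvar) (P : thread).

(* Thread states: a thread, or <q!l>;P after a choice has been made. *)
Inductive tstate : Type :=
| TS (P : thread)
| TOut (q : loc) (l : label) (P : thread).

(* Substitution P{Q/X} (Q is closed in all uses, so no capture). *)
Fixpoint subst (X : rvar) (Q P : thread) : thread :=
  match P with
  | TEnd => TEnd
  | TSend br => TSend (map (fun b => (fst b, subst X Q (snd b))) br)
  | TRecv br => TRecv (map (fun b => (fst b, subst X Q (snd b))) br)
  | TVar Y => if Nat.eqb Y X then Q else TVar Y
  | TMu Y P' => if Nat.eqb Y X then TMu Y P' else TMu Y (subst X Q P')
  end.

Fixpoint closed_in (bnd : list rvar) (P : thread) : Prop :=
  match P with
  | TEnd => True
  | TSend br => fold_right (fun b acc => closed_in bnd (snd b) /\ acc) True br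
  | TRecv br => fold_right (fun b acc => closed_in bnd (snd b) /\ acc) True br
  | TVar Y => In Y bnd
  | TMu Y P' => closed_in (Y :: bnd) P'
  end.

Definition closed (P : thread) : Prop := closed_in [] P.

Fixpoint unguarded (X : rvar) (P : thread) : Prop :=
  match P with
  | TVar Y => Y = X
  | TMu Y P' => Y <> X /\ unguarded X P'
  | _ => False
  end.

Fixpoint guarded (P : thread) : Prop :=
  match P with
  | TEnd => True
  | TSend br => fold_right (fun b acc => guarded (snd b) /\ acc) True br
  | TRecv br => fold_right (fun b acc => guarded (snd b) /\ acc) True br
  | TVar _ => True
  | TMu X P' => ~ unguarded X P' /\ guarded P'
  end.

Definition wf_thread (P : thread) : Prop := closed P /\ guarded P.

Definition wf_tstate (s : tstate) : Prop :=
  match s with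
  | TS P => wf_thread P
  | TOut _ _ P => wf_thread P
  end.

(* Networks: finite partial maps from locations to thread states
   (this representation builds in distinct locations and the
   associativity/commutativity/unit laws of parallel composition). *)
Definition net := loc -> option tstate.

Definition wf_net (N : net) : Prop :=
  (exists L : list loc, forall x, N x <> None -> In x L) /\
  (forall x s, N x = Some s -> wf_tstate s).

Definition upd (N : net) (p : loc) (v : option tstate) : net :=
  fun x => if Nat.eqb x p then v else N x.

(* Transition labels: tau (recording its moving location) or (p,l,q). *)
Inductive act : Type :=
| ATau (p : loc)
| AComm (p : loc) (l : label) (q : loc).

Definition comp (t : act) : loc -> Prop :=
  match t with
  | ATau p => fun x => x = p
  | AComm p _ q => fun x => x = p \/ x = q
  end.

Inductive step : net -> act -> net -> Prop :=
| st_choice (N N' : net) (p : loc) br q l P :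
    N p = Some (TS (TSend br)) -> In (q, l, P) br ->
    (forall x, N' x = upd N p (Some (TOut q l P)) x) ->
    step N (ATau p) N'
| st_unfold (N N' : net) (p : loc) X P :
    N p = Some (TS (TMu X P)) ->
    (forall x, N' x = upd N p (Some (TS (subst X (TMu X P) P))) x) ->
    step N (ATau p) N'
| st_comm (N N' : net) (p q : loc) l Q br P :
    N p = Some (TOut q l Q) -> N q = Some (TS (TRecv br)) ->
    In (p, l, P) br ->
    (forall x, N' x = upd (upd N p (Some (TS Q))) q (Some (TS P)) x) ->
    step N (AComm p l q) N'.

(* Paths: a state sequence with transition labels; either infinite
   (plen = None) or of finite length n ending in a state with no
   transition (maximality). *)
Record path : Type := {
  pst : nat -> net;
  pact : nat -> act;
  plen : option nat }.

Definition state_in (pi : path) (j : nat) : Prop :=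
  match plen pi with Some n => j <= n | None => True end.

Definition trans_in (pi : path) (j : nat) : Prop :=
  match plen pi with Some n => j < n | None => True end.

Definition valid_path (pi : path) : Prop :=
  wf_net (pst pi 0) /\
  (forall i, trans_in pi i -> step (pst pi i) (pact pi i) (pst pi (S i))) /\
  (forall n, plen pi = Some n -> forall t N', ~ step (pst pi n) t N').

(* Generic fairness for a notion of task. The suffix of pi from
   position k consists of states j >= k and transitions j >= k. *)
Section Fairness.
Variable Task : Type.
Variable enabled : Task -> net -> Prop.
Variable engages : Task -> act -> Prop.

Definition relentlessly_enabled (pi : path) (k : nat) (T : Task) : Prop :=
  forall k', k <= k' -> state_in pi k' ->
    exists j, k' <= j /\ state_in pi j /\ enabled T (pst pi j).

Definition perpetually_enabled (pi : path) (k : nat) (T : Task) : Prop :=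
  forall j, k <= j -> state_in pi j -> enabled T (pst pi j).

Definition engaged_in (pi : path) (k : nat) (T : Task) : Prop :=
  exists j, k <= j /\ trans_in pi j /\ engages T (pact pi j).

Definition strongly_fair (pi : path) : Prop :=
  forall k, state_in pi k -> forall T,
    relentlessly_enabled pi k T -> engaged_in pi k T.

Definition weakly_fair (pi : path) : Prop :=
  forall k, state_in pi k -> forall T,
    perpetually_enabled pi k T -> engaged_in pi k T.
End Fairness.

Definition enabled_C (p : loc) (N : net) : Prop :=
  exists t N', step N t N' /\ comp t p.
Definition engages_C (p : loc) (t : act) : Prop := comp t p.

Definition same_set (A B : loc -> Prop) : Prop := forall x, A x <-> B x.
Definition enabled_G (G : loc -> Prop) (N : net) : Prop :=
  exists t N', step N t N' /\ same_set (comp t) G.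
Definition engages_G (G : loc -> Prop) (t : act) : Prop := same_set (comp t) G.

Definition SC_fair := strongly_fair loc enabled_C engages_C.
Definition WC_fair := weakly_fair loc enabled_C engages_C.
Definition SG_fair := strongly_fair (loc -> Prop) enabled_G engages_G.
Definition WG_fair := weakly_fair (loc -> Prop) enabled_G engages_G.

From Stdlib Require Import Arith Lia Classical.

(* Call a location [a] of a network *active* when it is not
   waiting in an input [Sum_i p_i?l_i;P_i].  Every transition has an active
   actor (the mover of a tau step, the sender of a communication), and the
   state of an active location alone determines the group of any transition
   it takes part in: [{a}] for a choice/unfold, [{a,q}] for [<q!l>;Q].
   Moreover a location that takes part in no transition keeps its state.
   - SC => SG and WC => WG: if a group [G = comp t] is (relentlessly or
     perpetually) enabled, so is the actor [a] of [t]; component fairness makes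
     [a] move, and at its first move [a] is still in its state from [t],
     so that move has group [G].
   - SG => SC: if [p] is relentlessly enabled but never moves, its state is
     frozen.  If [p] itself is active, the single group determined by its
     state is relentlessly enabled; otherwise [p] is a receiver, its partner
     cannot move without [p], so the communication between them stays
     perpetually enabled.  Either way SG-fairness makes [p] move. *)

Lemma state_in_S_trans pi i : state_in pi (S i) -> trans_in pi i.
Proof. unfold state_in, trans_in; destruct (plen pi); lia. Qed.

Lemma trans_in_state pi i : trans_in pi i -> state_in pi i.
Proof. unfold state_in, trans_in; destruct (plen pi); lia. Qed.

Definition actor (t : act) : loc :=
  match t with ATau p => p | AComm p _ _ => p end.

Definition receiving (s : option tstate) : Prop :=
  exists br, s = Some (TS (TRecv br)).

(* The group of any transition whose actor [a] is in state [s]. *)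
Definition group_of (a : loc) (s : option tstate) : loc -> Prop :=
  match s with
  | Some (TOut q _ _) => fun x => x = a \/ x = q
  | _ => fun x => x = a
  end.

Lemma step_frame N t N' x : step N t N' -> ~ comp t x -> N' x = N x.
Proof.
  intros Hst Hx; destruct Hst as [? ? p ? ? ? ? _ _ E | ? ? p ? ? _ E
                                 | ? ? p q ? ? ? ? _ _ _ E];
    simpl in Hx; rewrite E; unfold upd;
    repeat match goal with |- context [Nat.eqb ?a ?b] =>
      destruct (Nat.eqb_spec a b) end; tauto.
Qed.

Lemma step_rebuild N t N' M :
  step N t N' -> (forall x, comp t x -> M x = N x) -> exists M', step M t M'.
Proof.
  intros Hst HM; destruct Hst as [? ? p ? ? ? ? Hp Hin _ | ? ? p ? ? Hp _
                                 | ? ? p q ? ? ? ? Hp Hq Hin _]; simpl in HM.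
  - eexists; eapply st_choice; [rewrite HM; eauto | eauto | intro; reflexivity].
  - eexists; eapply st_unfold; [rewrite HM; eauto | intro; reflexivity].
  - eexists; eapply st_comm;
      [rewrite HM; eauto | rewrite HM; eauto | eauto | intro; reflexivity].
Qed.

Lemma step_actor N t N' :
  step N t N' ->
  ~ receiving (N (actor t)) /\ same_set (comp t) (group_of (actor t) (N (actor t))).
Proof.
  intro Hst; destruct Hst as [? ? p ? ? ? ? Hp _ _ | ? ? p ? ? Hp _
                             | ? ? p q ? ? ? ? Hp _ _ _]; simpl; rewrite Hp;
    (split; [intros [? E]; discriminate E | intro x; simpl; tauto]).
Qed.

Lemma step_active_is_actor N t N' a :
  step N t N' -> comp t a -> ~ receiving (N a) -> actor t = a.
Proof.
  intros Hst Ha Hrecv; destruct Hst as [| | ? ? p q ? ? ? ? _ Hq _ _];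
    simpl in *; auto.
  destruct Ha as [-> | ->]; auto.
  exfalso; apply Hrecv; exists br; exact Hq.
Qed.

Lemma step_active_group N t N' a :
  step N t N' -> comp t a -> ~ receiving (N a) ->
  same_set (comp t) (group_of a (N a)).
Proof.
  intros Hst Ha Hrecv.
  rewrite <- (step_active_is_actor _ _ _ _ Hst Ha Hrecv).
  exact (proj2 (step_actor _ _ _ Hst)).
Qed.

Lemma frozen pi j a : valid_path pi ->
  (forall i, j <= i -> trans_in pi i -> pst pi i a = pst pi j a ->
     ~ comp (pact pi i) a) ->
  forall i, j <= i -> state_in pi i -> pst pi i a = pst pi j a.
Proof.
  intros [_ [Hsteps _]] Hquiet; induction i as [|i IH]; intros Hji Hi.
  - replace j with 0 by lia; reflexivity.
  - destruct (Nat.eq_dec j (S i)) as [-> | Hne]; [reflexivity|].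
    assert (Ht := state_in_S_trans _ _ Hi).
    assert (Hprev := IH ltac:(lia) (trans_in_state _ _ Ht)).
    rewrite (step_frame _ _ _ _ (Hsteps i Ht)); auto.
    apply Hquiet; auto; lia.
Qed.

Lemma first_move pi j a : valid_path pi ->
  engaged_in loc engages_C pi j a ->
  exists m, j <= m /\ trans_in pi m /\ comp (pact pi m) a /\
    pst pi m a = pst pi j a.
Proof.
  intros Hv [m0 [Hjm0 [Htm0 Hm0]]]; apply NNPP; intro Hnone.
  assert (Hfix := frozen pi j a Hv).
  apply Hnone; exists m0; repeat split; auto.
  apply Hfix; auto using trans_in_state.
  intros i Hji Hti Hi Hc; apply Hnone; exists i; auto.
Qed.

Lemma actor_move_has_group pi j t N' : valid_path pi ->
  step (pst pi j) t N' ->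
  engaged_in loc engages_C pi j (actor t) ->
  engaged_in (loc -> Prop) engages_G pi j (comp t).
Proof.
  intros Hv Hst Heng.
  destruct (first_move pi j _ Hv Heng) as [m [Hjm [Htm [Hcm Hsame]]]].
  destruct (step_actor _ _ _ Hst) as [Hact Hgrp].
  assert (Hstm := proj1 (proj2 Hv) m Htm).
  assert (Hgm := step_active_group _ _ _ _ Hstm Hcm ltac:(rewrite Hsame; exact Hact)).
  exists m; split; [exact Hjm | split; [exact Htm |]].
  intro x; rewrite (Hgm x), (Hgrp x), Hsame; tauto.
Qed.

Lemma relentless_mono (T1 T2 : Type) (en1 : T1 -> net -> Prop)
  (en2 : T2 -> net -> Prop) pi k x y :
  (forall N, en1 x N -> en2 y N) ->
  relentlessly_enabled T1 en1 pi k x -> relentlessly_enabled T2 en2 pi k y.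
Proof.
  intros Himp Hrel k' Hk' Hs.
  destruct (Hrel k' Hk' Hs) as [j [? [? ?]]]; eauto.
Qed.

Lemma perpetual_mono (T1 T2 : Type) (en1 : T1 -> net -> Prop)
  (en2 : T2 -> net -> Prop) pi k x y :
  (forall N, en1 x N -> en2 y N) ->
  perpetually_enabled T1 en1 pi k x -> perpetually_enabled T2 en2 pi k y.
Proof. intros Himp Hper j Hj Hs; auto. Qed.

Lemma relentless_suffix (T : Type) (en : T -> net -> Prop) pi k j x :
  k <= j -> relentlessly_enabled T en pi k x -> relentlessly_enabled T en pi j x.
Proof. intros Hkj Hrel k' Hk'; apply Hrel; lia. Qed.

Lemma perpetual_relentless (T : Type) (en : T -> net -> Prop) pi k x :
  perpetually_enabled T en pi k x -> relentlessly_enabled T en pi k x.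
Proof. intros Hper k' Hk' Hs; exists k'; auto. Qed.

Lemma enabled_G_C (G : loc -> Prop) a N :
  G a -> enabled_G G N -> enabled_C a N.
Proof. intros Ha [t [N' [Hst Hsame]]]; exists t, N'; split; auto; apply Hsame, Ha. Qed.

Lemma engaged_G_C pi k (G : loc -> Prop) a :
  G a -> engaged_in (loc -> Prop) engages_G pi k G -> engaged_in loc engages_C pi k a.
Proof. intros Ha [m [? [? Hm]]]; exists m; repeat split; auto; apply Hm, Ha. Qed.

Lemma engaged_G_weaken pi k j (G H : loc -> Prop) :
  k <= j -> same_set G H ->
  engaged_in (loc -> Prop) engages_G pi j G -> engaged_in (loc -> Prop) engages_G pi k H.
Proof.
  intros Hkj HGH [m [Hjm [Htm Hm]]]; exists m; split; [lia | split; [exact Htm |]].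
  intro x; rewrite (Hm x); apply HGH.
Qed.

Lemma SC_SG pi : valid_path pi -> SC_fair pi -> SG_fair pi.
Proof.
  intros Hv HSC k Hk G Hrel.
  destruct (Hrel k (le_n k) Hk) as [j [Hkj [Hj [t [N' [Hst HtG]]]]]].
  assert (HG : G (actor t)) by (apply HtG; destruct t; simpl; auto).
  assert (Hact : engaged_in loc engages_C pi j (actor t)).
  { apply HSC; auto.
    apply (relentless_mono _ _ enabled_G _ pi j G); [exact (fun N => enabled_G_C G _ N HG)|].
    exact (relentless_suffix _ _ _ _ _ _ Hkj Hrel). }
  exact (engaged_G_weaken _ _ _ _ _ Hkj HtG (actor_move_has_group _ _ _ _ Hv Hst Hact)).
Qed.

Lemma WC_WG pi : valid_path pi -> WC_fair pi -> WG_fair pi.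
Proof.
  intros Hv HWC k Hk G Hper.
  destruct (Hper k (le_n k) Hk) as [t [N' [Hst HtG]]].
  assert (HG : G (actor t)) by (apply HtG; destruct t; simpl; auto).
  assert (Hact : engaged_in loc engages_C pi k (actor t)).
  { apply HWC; auto.
    exact (perpetual_mono _ _ enabled_G _ pi k G _ (fun N => enabled_G_C G _ N HG) Hper). }
  exact (engaged_G_weaken _ _ _ _ _ (le_n k) HtG (actor_move_has_group _ _ _ _ Hv Hst Hact)).
Qed.

Lemma frozen_active_group pi k j p t N' :
  k <= j -> state_in pi j -> step (pst pi j) t N' -> actor t = p ->
  (forall i, k <= i -> state_in pi i -> pst pi i p = pst pi k p) ->
  relentlessly_enabled loc enabled_C pi k p ->
  relentlessly_enabled (loc -> Prop) enabled_G pi k (group_of p (pst pi k p)).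
Proof.
  intros Hkj Hj Hst Hactor Hfix Hrel k' Hk' Hs.
  destruct (step_actor _ _ _ Hst) as [Hact _]; rewrite Hactor in Hact.
  destruct (Hrel k' Hk' Hs) as [j' [Hj' [Hsj' [t' [N'' [Hst' Hp]]]]]].
  exists j'; split; [lia | split; [exact Hsj' |]]; exists t', N''; split; [exact Hst' |].
  rewrite <- (Hfix j' ltac:(lia) Hsj').
  apply (step_active_group _ _ _ _ Hst' Hp).
  rewrite (Hfix j' ltac:(lia) Hsj'), <- (Hfix j Hkj Hj); exact Hact.
Qed.

(* A receiver [p] that never moves again keeps its partner [r] frozen,
   so the communication between them stays enabled. *)
Lemma frozen_receiver_comm pi k j p r l N' : valid_path pi ->
  k <= j -> state_in pi j -> step (pst pi j) (AComm r l p) N' ->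
  (forall i, k <= i -> state_in pi i -> pst pi i p = pst pi k p) ->
  ~ engaged_in loc engages_C pi k p ->
  perpetually_enabled (loc -> Prop) enabled_G pi j (comp (AComm r l p)).
Proof.
  intros Hv Hkj Hj Hst Hfixp Hquiet.
  destruct (step_actor _ _ _ Hst) as [Hact Hgrp]; simpl actor in *.
  assert (Hfixr : forall i, j <= i -> state_in pi i -> pst pi i r = pst pi j r).
  { apply (frozen pi j r Hv); intros i Hji Hti Hsame Hc.
    apply Hquiet; exists i; repeat split; auto; try lia.
    apply (step_active_group _ _ _ _ (proj1 (proj2 Hv) i Hti) Hc);
      rewrite Hsame; auto.
    apply Hgrp; simpl; auto. }
  intros i Hji Hi.
  destruct (step_rebuild _ _ _ (pst pi i) Hst) as [M' HM].
  - intros x [-> | ->]; [apply Hfixr; auto|].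
    rewrite (Hfixp i), (Hfixp j); auto; lia.
  - exists (AComm r l p), M'; split; auto; intro; tauto.
Qed.

Lemma SG_SC pi : valid_path pi -> SG_fair pi -> SC_fair pi.
Proof.
  intros Hv HSG k Hk p Hrel; apply NNPP; intro Hquiet.
  assert (Hfix : forall i, k <= i -> state_in pi i -> pst pi i p = pst pi k p).
  { apply (frozen pi k p Hv); intros i Hki Hti _ Hc.
    apply Hquiet; exists i; split; [exact Hki | split; [exact Hti | exact Hc]]. }
  destruct (Hrel k (le_n k) Hk) as [j [Hkj [Hj [t [N' [Hst Hp]]]]]].
  destruct (Nat.eq_dec (actor t) p) as [Hactor | Hother].
  - apply Hquiet, (engaged_G_C _ _ (group_of p (pst pi k p))).
    + destruct (pst pi k p) as [[|]|]; simpl; auto.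
    + apply HSG; auto; eapply frozen_active_group; eauto.
  - destruct t as [p0 | r l q]; simpl in Hp, Hother; [congruence|].
    destruct Hp as [Hpr | Hpq]; [congruence | subst q].
    apply Hquiet, (engaged_G_C _ _ (comp (AComm r l p))); [simpl; auto|].
    apply (engaged_G_weaken _ _ j _ _ Hkj (fun x => iff_refl _)).
    apply HSG, perpetual_relentless; auto.
    eapply frozen_receiver_comm; eauto.
Qed.

Theorem mainTheorem12 : forall pi : path, valid_path pi ->
  (SG_fair pi <-> SC_fair pi) /\ (WC_fair pi -> WG_fair pi).
Proof.
  intros pi Hv; split; [split|].
  - exact (SG_SC pi Hv).
  - exact (SC_SG pi Hv).
  - exact (WC_WG pi Hv).
Qed.
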